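(* Let $n$ be a nonnegative integer and $a,b\in\mathbb{C}$ such that all expressions below are defined (no lower parameter zero or a negative integer). Then \[ \left[{}_3F_2\!\left(\left.{-\frac{b}{2}-n,\frac{1-b}{2}-n,-a-2n \atop -b-2n,1-b-n}\right| 4\right)\right]_n =\frac{(-1)^n(1+a)_{2n}}{n!\,(1+a)_n}\,{}_4F_3\!\left(\left.{-n,\frac{1+a-b}{2},\frac{2+a-b}{2},1 \atop 1+a-b,1-b-n,1+a+n}\right| 4\right). \]
   Context: For $a\in\mathbb{C}$, $(a)_0=1$ and $(a)_k=a(a+1)\cdots(a+k-1)$ for $k\ge1$. The hypergeometric series is ${}_rF_s\!\left(\left.{\alpha_1,\ldots,\alpha_r\atop \beta_1,\ldots,\beta_s}\right|z\right)=\sum_{k\ge0}\frac{(\alpha_1)_k\cdots(\alpha_r)_k}{k!(\beta_1)_k\cdots(\beta_s)_k}z^k$, with no lower parameter zero or a negative integer; it is a finite sum when an upper parameter is $-n$. The bracket $\left[{}_rF_s(\cdots|z)\right]_n$ denotes the sum of the first $n+1$ terms, $\sum_{k=0}^{n}\frac{(\alpha_1)_k\cdots(\alpha_r)_k}{k!(\beta_1)_k\cdots(\beta_s)_k}z^k$. *)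

From mathcomp Require Import all_boot all_order all_algebra.
From mathcomp Require Import complex.
From mathcomp Require Import reals.
Set Implicit Arguments. Unset Strict Implicit. Unset Printing Implicit Defensive.
Import Order.TTheory GRing.Theory Num.Theory.
Local Open Scope ring_scope.

Definition poch {F : fieldType} (a : F) (k : nat) : F :=
  \prod_(i < k) (a + i%:R).

Definition hyp_term {F : fieldType} (al be : seq F) (z : F) (k : nat) : F :=
  (\prod_(x <- al) poch x k) / (k`!%:R * \prod_(y <- be) poch y k) * z ^+ k.

Definition hypF_trunc {F : fieldType} (al be : seq F) (z : F) (n : nat) : F :=
  \sum_(0 <= k < n.+1) hyp_term al be z k.

Definition admissible_lower {F : fieldType} (b : F) : Prop :=
  forall m : nat, b <> - m%:R.

From mathcomp Require Import all_boot all_order all_algebra.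
From mathcomp Require Import complex.
From mathcomp Require Import reals.
From mathcomp.algebra_tactics Require Import ring.
From mathcomp Require Import zify.
Import GRing.Theory Num.Theory.
Set Implicit Arguments. Unset Strict Implicit. Unset Printing Implicit Defensive.
Local Open Scope ring_scope.

(* With A = -a-2n, x = -b-2n, g = 1-b-n = x+n+1 and y = 1+a-b, Legendre's duplication
   (x/2)_k ((x+1)/2)_k 4^k = (x)_k (x+k)_k turns the k-th term of the 3F2 into
   (A)_k/k! (x+k)_k/(g)_k, and the (n-k)-th term of the scaled 4F3 into
   (A)_k/k! (y+n-k)_{n-k}/(g)_{n-k}.  Both sums equal the double sum of
   (A)_m/m! (-1)^j C(m,j) (n-m+1)_j/(g)_j over 0 <= j <= m <= n: summing over j
   for fixed m, resp. for fixed k = m - j, is in each case a Chu-Vandermonde sum. *)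

Section Pochhammer.
Variable F : fieldType.
Implicit Types (x y b c : F) (k m : nat).

Lemma poch0 x : poch x 0 = 1.
Proof. by rewrite /poch big_ord0. Qed.

Lemma pochS x k : poch x k.+1 = poch x k * (x + k%:R).
Proof. by rewrite /poch big_ord_recr. Qed.

Lemma pochD x m k : poch x (m + k) = poch x m * poch (x + m%:R) k.
Proof.
elim: k => [|k IH]; first by rewrite addn0 poch0 mulr1.
by rewrite addnS !pochS IH natrD addrA mulrA.
Qed.

Lemma poch_neq0_le x k m : (k <= m)%N -> poch x m != 0 -> poch x k != 0.
Proof. by move/subnKC <-; rewrite pochD mulf_eq0 negb_or => /andP[]. Qed.

Lemma admissible_poch_neq0 x k : admissible_lower x -> poch x k != 0.
Proof.
move=> adm; apply/prodf_neq0 => i _.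
by rewrite addr_eq0; apply/eqP/adm.
Qed.

Lemma poch_reflect x m : poch x m = (-1) ^+ m * poch (1 - x - m%:R) m.
Proof.
elim: m => [|m IH]; first by rewrite !poch0 mulr1.
rewrite pochS exprS -add1n pochD IH.
have -> : 1 - x - (1 + m)%:R + 1%:R = 1 - x - m%:R by rewrite natrD; ring.
by rewrite /poch big_ord1 /= natrD; ring.
Qed.

Lemma poch1 k : poch 1 k = k`!%:R :> F.
Proof. by elim: k => [|k IH]; rewrite ?poch0 // pochS IH factS natrM -natr1 mulrC addrC. Qed.

Lemma poch_opp_nat m k : poch (- m%:R) k = (-1) ^+ k * (m ^_ k)%:R :> F.
Proof.
elim: k => [|k IH]; first by rewrite poch0 mulr1.
rewrite pochS IH ffactnSr exprS natrM.
have [km | mk] := leqP k m; first by rewrite natrB //; ring.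
by rewrite ffact_small // !(mul0n, mulr0, mul0r).
Qed.

Lemma poch_natD1 m k : poch (m%:R + 1) k * m`!%:R = (m + k)`!%:R :> F.
Proof. by rewrite -!poch1 pochD mulrC [_ + 1]addrC. Qed.

Lemma vandermonde_poch x y n :
  poch (x + y) n = \sum_(0 <= i < n.+1) poch x i * poch y (n - i) *+ 'C(n, i).
Proof.
elim: n => [|n IH]; first by rewrite big_nat1 !poch0 mulr1.
rewrite pochS IH big_distrl /=.
transitivity (\sum_(0 <= i < n.+1) (poch x i.+1 * poch y (n - i) *+ 'C(n, i)
   + poch x i * poch y (n.+1 - i) *+ 'C(n, i))).
  apply: eq_big_nat => i /andP[_ lt_in].
  by rewrite subSn // !pochS natrB //; ring.
rewrite big_split /= [RHS]big_nat_recl //.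
under [in RHS]eq_big_nat => i _ do rewrite subSS binS mulrnDr.
rewrite big_split /= addrA [RHS]addrC; congr (_ + _).
rewrite big_nat_recl // [in RHS]big_nat_recr //= [in RHS](bin_small (ltnSn n)).
by rewrite mulr0n addr0 !bin0; under eq_big_nat => i _ do rewrite subSS.
Qed.

Lemma chu_vandermonde_cleared b c m :
  \sum_(0 <= j < m.+1) (-1) ^+ j * poch b j * poch (c + j%:R) (m - j) *+ 'C(m, j)
  = poch (c - b) m.
Proof.
have -> : poch (c - b) m = (-1) ^+ m * poch (b + (1 - c - m%:R)) m.
  by rewrite poch_reflect; congr (_ * poch _ _); ring.
rewrite vandermonde_poch big_distrr /=; apply: eq_big_nat => j /andP[_ le_jm].
rewrite ltnS in le_jm; rewrite [poch (c + _) _]poch_reflect.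
have -> : 1 - (c + j%:R) - (m - j)%:R = 1 - c - m%:R by rewrite natrB //; ring.
have -> : (-1) ^+ m = (-1) ^+ j * (-1) ^+ (m - j) :> F by rewrite -exprD subnKC.
ring.
Qed.

Lemma chu_vandermonde b c m : poch c m != 0 ->
  \sum_(0 <= j < m.+1) (-1) ^+ j * poch b j / poch c j *+ 'C(m, j)
  = poch (c - b) m / poch c m.
Proof.
move=> cm_neq0; apply: (mulIf cm_neq0); rewrite divfK // -chu_vandermonde_cleared.
rewrite big_distrl /=; apply: eq_big_nat => j /andP[_ le_jm].
rewrite ltnS in le_jm.
have cj_neq0 : poch c j != 0 := poch_neq0_le le_jm cm_neq0.
have -> : poch c m = poch c j * poch (c + j%:R) (m - j) by rewrite -pochD subnKC.
by rewrite mulrnAl mulrA divfK.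
Qed.

End Pochhammer.

Lemma sum_nat_triangle (V : nmodType) (u : nat -> nat -> V) n :
  \sum_(0 <= m < n.+1) \sum_(0 <= j < m.+1) u m j
  = \sum_(0 <= k < n.+1) \sum_(0 <= j < (n - k).+1) u (k + j)%N j.
Proof.
elim: n => [|n IH]; first by rewrite !big_nat1.
rewrite big_nat_recr //= IH [RHS]big_nat_recr //= subnn big_nat1 addn0.
have split_row k : (0 <= k < n.+1)%N -> \sum_(0 <= j < (n.+1 - k).+1) u (k + j)%N j
    = \sum_(0 <= j < (n - k).+1) u (k + j)%N j + u n.+1 (n.+1 - k)%N.
  by case/andP=> _ lt_kn; rewrite subSn // big_nat_recr //= addnS subnKC.
rewrite (eq_big_nat _ _ split_row) big_split /= -addrA; congr (_ + _).
by rewrite big_nat_rev big_nat_recr //= subnn.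
Qed.

Section PochhammerNumField.
Variable F : numFieldType.
Implicit Types (x u v w : F) (k m n : nat).

Lemma natr_fact_neq0 k : k`!%:R != 0 :> F.
Proof. by rewrite pnatr_eq0 -lt0n fact_gt0. Qed.

Lemma poch_dup x k :
  poch (x / 2%:R) k * poch ((x + 1) / 2%:R) k = poch x k.*2 / 4%:R ^+ k.
Proof.
have four_neq0 : 4%:R != 0 :> F by rewrite pnatr_eq0.
elim: k => [|k IH]; first by rewrite !poch0 mulr1 divr1.
rewrite doubleS !pochS mulrACA IH exprS -[k.*2.+1%:R]natr1 -mul2n natrM.
by field; rewrite expf_neq0.
Qed.

Lemma poch_natD1_bin m k : poch (m%:R + 1) k = 'C(m + k, k)%:R * k`!%:R :> F.
Proof.
apply: (mulIf (natr_fact_neq0 m)); rewrite poch_natD1 -!natrM -mulnA.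
by rewrite -{3}(addnK k m) bin_fact ?leq_addl.
Qed.

Lemma poch_double_div x n : poch x n != 0 -> poch x n.*2 / poch x n = poch (x + n%:R) n.
Proof. by move=> xn_neq0; rewrite -addnn pochD mulrC mulKf. Qed.

Lemma hyp_term_3F2_half x u v k : poch x k != 0 -> poch v k != 0 ->
  hyp_term [:: x / 2%:R; (x + 1) / 2%:R; u] [:: x; v] 4%:R k
  = poch u k / k`!%:R * (poch (x + k%:R) k / poch v k).
Proof.
move=> xk_neq0 vk_neq0; have k_neq0 := natr_fact_neq0 k.
have four_neq0 : 4%:R != 0 :> F by rewrite pnatr_eq0.
rewrite /hyp_term !big_cons !big_nil !mulr1 mulrA poch_dup -addnn pochD.
by field; rewrite xk_neq0 vk_neq0 k_neq0 expf_neq0.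
Qed.

Lemma hyp_term_4F3_half y u v w k :
  poch y k != 0 -> poch v k != 0 -> poch w k != 0 ->
  hyp_term [:: u; y / 2%:R; (y + 1) / 2%:R; 1] [:: y; v; w] 4%:R k
  = poch u k * (poch (y + k%:R) k / (poch v k * poch w k)).
Proof.
move=> yk_neq0 vk_neq0 wk_neq0; have k_neq0 := natr_fact_neq0 k.
have four_neq0 : 4%:R != 0 :> F by rewrite pnatr_eq0.
rewrite /hyp_term !big_cons !big_nil !mulr1 poch1 [poch (y / _) _ * _]mulrA poch_dup.
rewrite -addnn pochD.
by field; rewrite yk_neq0 vk_neq0 wk_neq0 k_neq0 expf_neq0.
Qed.

Lemma poch_opp_nat_reversal (c : F) n k : (k <= n)%N -> poch c k != 0 ->
  (-1) ^+ n * poch c n / n`!%:R * (poch (- n%:R) k / poch c k)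
  = poch (1 - c - n%:R) (n - k) / (n - k)`!%:R.
Proof.
move=> le_kn ck_neq0.
have sign_sqr i : (-1) ^+ i * (-1) ^+ i = 1 :> F by rewrite -expr2 sqrr_sign.
have reflect_tail : (-1) ^+ (n - k) * poch (c + k%:R) (n - k) = poch (1 - c - n%:R) (n - k).
  by rewrite poch_reflect mulrA sign_sqr mul1r natrB //; congr poch; ring.
have -> : (-1) ^+ n = (-1) ^+ k * (-1) ^+ (n - k) :> F by rewrite -exprD subnKC.
have -> : poch c n = poch c k * poch (c + k%:R) (n - k) by rewrite -pochD subnKC.
have -> : n`!%:R = (n ^_ k)%:R * (n - k)`!%:R :> F by rewrite -natrM ffact_fact.
have ffact_neq0 : (n ^_ k)%:R != 0 :> F by rewrite pnatr_eq0 -lt0n ffact_gt0.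
have nk_neq0 := natr_fact_neq0 (n - k).
rewrite poch_opp_nat -reflect_tail.
transitivity ((-1) ^+ k * (-1) ^+ k *
  ((-1) ^+ (n - k) * poch (c + k%:R) (n - k) / (n - k)`!%:R)).
  by field; rewrite ck_neq0 ffact_neq0 nk_neq0.
by rewrite sign_sqr mul1r.
Qed.

End PochhammerNumField.

Section Transformation.
Variables (F : numFieldType) (n : nat) (a c : F).
Hypothesis c_neq0 : poch c n != 0.

Let term m j :=
  poch a m / m`!%:R * ((-1) ^+ j * poch ((n - m)%:R + 1) j / poch c j *+ 'C(m, j)).

Let term_row_sum m : (m <= n)%N ->
  \sum_(0 <= j < m.+1) term m j
  = poch a m / m`!%:R * (poch (c - ((n - m)%:R + 1)) m / poch c m).
Proof.
move=> le_mn; rewrite -big_distrr /= chu_vandermonde //.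
exact: poch_neq0_le le_mn c_neq0.
Qed.

Let term_shift k j : (k + j <= n)%N ->
  term (k + j) j
  = poch a k / k`!%:R * ((-1) ^+ j * poch (a + k%:R) j / poch c j *+ 'C(n - k, j)).
Proof.
move=> le_kjn; rewrite /term pochD.
have -> : (k + j)`!%:R = 'C(k + j, j)%:R * (j`!%:R * k`!%:R) :> F.
  by rewrite -!natrM -{3}(addnK j k) bin_fact ?leq_addl.
have -> : poch ((n - (k + j))%:R + 1) j = 'C(n - k, j)%:R * j`!%:R :> F.
  by rewrite poch_natD1_bin subnDA subnK //; lia.
have cj_neq0 : poch c j != 0 by apply: poch_neq0_le c_neq0; lia.
have bin_neq0 : 'C(k + j, j)%:R != 0 :> F by rewrite pnatr_eq0 -lt0n bin_gt0 leq_addl.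
have k_neq0 := natr_fact_neq0 F k; have j_neq0 := natr_fact_neq0 F j.
by field; rewrite cj_neq0 k_neq0 j_neq0 bin_neq0.
Qed.

Let term_column_sum k : (k <= n)%N ->
  \sum_(0 <= j < (n - k).+1) term (k + j) j
  = poch a k / k`!%:R * (poch (c - a - k%:R) (n - k) / poch c (n - k)).
Proof.
move=> le_kn; rewrite (eq_big_nat _ _ (fun j (hj : (0 <= j < (n - k).+1)%N) =>
  term_shift (_ : k + j <= n)%N)); last by lia.
rewrite -big_distrr /= chu_vandermonde ?opprD ?addrA //.
by apply: poch_neq0_le c_neq0; rewrite leq_subr.
Qed.

Lemma sum_poch_transformation :
  \sum_(0 <= m < n.+1) poch a m / m`!%:R * (poch (c - ((n - m)%:R + 1)) m / poch c m)
  = \sum_(0 <= k < n.+1) poch a k / k`!%:R * (poch (c - a - k%:R) (n - k) / poch c (n - k)).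
Proof.
transitivity (\sum_(0 <= m < n.+1) \sum_(0 <= j < m.+1) term m j).
  by apply: eq_big_nat => m /andP[_ lt_mn]; rewrite term_row_sum.
rewrite sum_nat_triangle; apply: eq_big_nat => k /andP[_ lt_kn].
by rewrite term_column_sum.
Qed.

End Transformation.

Theorem mainTheorem11 (R : realType) (n : nat) (a b : R[i]) :
  admissible_lower (- b - n.*2%:R) ->
  admissible_lower (1 - b - n%:R) ->
  admissible_lower (1 + a - b) ->
  admissible_lower (1 + a + n%:R) ->
  poch (1 + a) n != 0 ->
  hypF_trunc [:: - b / 2%:R - n%:R; (1 - b) / 2%:R - n%:R; - a - n.*2%:R]
             [:: - b - n.*2%:R; 1 - b - n%:R] 4%:R n
  = (-1) ^+ n * poch (1 + a) n.*2 / (n`!%:R * poch (1 + a) n) *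
    hypF_trunc [:: - n%:R; (1 + a - b) / 2%:R; (2%:R + a - b) / 2%:R; 1]
               [:: 1 + a - b; 1 - b - n%:R; 1 + a + n%:R] 4%:R n.
Proof.
move=> /admissible_poch_neq0 x_neq0 /admissible_poch_neq0 g_neq0
  /admissible_poch_neq0 y_neq0 /admissible_poch_neq0 c_neq0 a_neq0.
set x := - b - n.*2%:R; set g := 1 - b - n%:R; set y := 1 + a - b.
set c := 1 + a + n%:R; set A := - a - n.*2%:R.
have n2E : n.*2%:R = 2%:R * n%:R :> R[i] by rewrite -mul2n natrM.
have -> : - b / 2%:R - n%:R = x / 2%:R by rewrite /x n2E; field.
have -> : (1 - b) / 2%:R - n%:R = (x + 1) / 2%:R by rewrite /x n2E; field.
have -> : (2%:R + a - b) / 2%:R = (y + 1) / 2%:R by rewrite /y; congr (_ / _); ring.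
rewrite /hypF_trunc big_distrr /=.
transitivity (\sum_(0 <= k < n.+1)
    poch A k / k`!%:R * (poch (g - ((n - k)%:R + 1)) k / poch g k)).
  apply: eq_big_nat => k /andP[_ lt_kn]; rewrite hyp_term_3F2_half //.
  by congr (_ * (poch _ _ / _)); rewrite /x /g natrB // n2E; ring.
rewrite sum_poch_transformation // big_nat_rev /=.
apply: eq_big_nat => k /andP[_ lt_kn]; rewrite ltnS in lt_kn.
rewrite add0n subSS subKn // hyp_term_4F3_half //.
have -> : (-1) ^+ n * poch (1 + a) n.*2 / (n`!%:R * poch (1 + a) n)
    = (-1) ^+ n * poch c n / n`!%:R.
  by rewrite /c -poch_double_div //; field; rewrite a_neq0 natr_fact_neq0.
transitivity ((-1) ^+ n * poch c n / n`!%:R * (poch (- n%:R) k / poch c k)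
    * (poch (y + k%:R) k / poch g k)).
  2: by field; rewrite g_neq0 c_neq0 natr_fact_neq0.
rewrite poch_opp_nat_reversal //.
by congr (poch _ _ / _ * (poch _ _ / _)); rewrite /A /c /g /y ?natrB // n2E; ring.
Qed.
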